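(* Let $K$ be a field of characteristic zero, $x=(x_1,\dots,x_n)$, and let $F\in K[x]^n$ be a Keller map such that $\mathcal{J}F$ is symmetric. If for some index $i$, $F_i=c'x_i+x_i^2h+c$ for some $c,c'\in K$ and $h\in K[x]$, then $h=0$.
   Context: A Keller map is a polynomial map $F\in K[x]^n$ with $\det\mathcal{J}F\in K^{*}$, $\mathcal{J}$ the Jacobian matrix. *)

From mathcomp Require Import all_boot all_algebra.
From mathcomp Require Import mpoly.
Set Implicit Arguments. Unset Strict Implicit. Unset Printing Implicit Defensive.
Import GRing.Theory.
Local Open Scope ring_scope.

Definition jacobian (K : fieldType) (n : nat) (F : 'I_n -> {mpoly K[n]})
  : 'M[{mpoly K[n]}]_n :=
  \matrix_(i < n, j < n) (F i)^`M(j).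

Definition keller (K : fieldType) (n : nat) (F : 'I_n -> {mpoly K[n]}) : Prop :=
  exists c : K, c != 0 /\ \det (jacobian F) = c%:MP.

From mathcomp Require Import all_boot all_algebra.
From mathcomp Require Import mpoly.
From mathcomp Require Import ring.
Set Implicit Arguments. Unset Strict Implicit. Unset Printing Implicit Defensive.
Import GRing.Theory.
Local Open Scope ring_scope.

(* Write F_i = c' x_i + x_i^(k+2) g + c. Off the diagonal, row i of JF is
   x_i^(k+2) grad g, and by symmetry so is column i; hence the x_i-derivative of
   the minor C complementary to the entry (i, i) is divisible by x_i^(k+2).
   Differentiating the row expansion det JF = d_i F_i C + x_i^(k+2) q, which is a
   nonzero constant, in x_i leaves (k+1)(k+2) g C = 0 mod x_i, while the same
   expansion read mod x_i gives det JF = c' C mod x_i. In characteristic zero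
   this forces x_i | g. Starting from g = h and iterating, h is divisible by
   every power of x_i, hence h = 0. *)

Definition divides (R : comPzRingType) (d p : R) : Prop := exists q, p = d * q.

Section Divides.
Variable R : comPzRingType.
Implicit Types d p q : R.

Lemma divides0 d : divides d 0.
Proof. by exists 0; rewrite mulr0. Qed.

Lemma dividesD d p q : divides d p -> divides d q -> divides d (p + q).
Proof. by move=> [a ->] [b ->]; exists (a + b); rewrite mulrDr. Qed.

Lemma dividesMr d p q : divides d p -> divides d (p * q).
Proof. by move=> [a ->]; exists (a * q); rewrite mulrA. Qed.

Lemma dividesMl d p q : divides d q -> divides d (p * q).
Proof. by move=> [a ->]; exists (p * a); rewrite mulrCA. Qed.

Lemma divides_mulr d q : divides d (d * q).
Proof. by exists q. Qed.

End Divides.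

Section MpolyDerivative.
Variables (K : fieldType) (n : nat).
Implicit Types (p : {mpoly K[n]}) (i j : 'I_n).

Lemma mderiv_X i j : ('X_i : {mpoly K[n]})^`M(j) = (i == j)%:R.
Proof.
rewrite mderivX mnm1E; case: eqP => [->|_]; last by rewrite scale0r.
by rewrite scale1r -mpolyX0; congr mpolyX; apply/mnmP=> k; rewrite !mnmE subnn.
Qed.

Lemma mderivXn j p k : (p ^+ k.+1)^`M(j) = k.+1%:R * p ^+ k * p^`M(j).
Proof.
elim: k => [|k IH]; first by rewrite expr1 expr0 mulr1 mul1r.
by rewrite exprS mderivM IH exprS [k.+2%:R]mulrS; ring.
Qed.

Lemma divides_mderiv_prod j d m (f : 'I_m -> {mpoly K[n]}) :
  (forall a, divides d (f a)^`M(j)) -> divides d (\prod_a f a)^`M(j).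
Proof.
move=> df; apply: (big_ind (fun p => divides d p^`M(j))) => // [|p q dp dq].
  by rewrite -mpolyC1 mderivC; apply: divides0.
by rewrite mderivM; apply: dividesD; [apply: dividesMr | apply: dividesMl].
Qed.

Lemma divides_mderiv_det j d m (M : 'M[{mpoly K[n]}]_m) :
  (forall a b, divides d (M a b)^`M(j)) -> divides d (\det M)^`M(j).
Proof.
move=> dM; apply: (big_ind (fun p => divides d p^`M(j))) => [|p q|s _].
- by rewrite mderiv0; apply: divides0.
- by rewrite mderivD; apply: dividesD.
rewrite -(rmorph_sign (@mpolyC n K)) mderiv_mulC; apply: dividesMl.
by apply: divides_mderiv_prod => a; apply: dM.
Qed.

Lemma mpolyX_neq0 i : ('X_i : {mpoly K[n]}) != 0.
Proof.
apply/eqP=> X0; have := @mcoeffXU n K i i.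
by rewrite X0 mcoeff0 eqxx => /eqP; rewrite eq_sym oner_eq0.
Qed.

(* A nonzero multiple of x_i^k has size (= total degree + 1) exceeding k. *)
Lemma dividesXn_eq0 i p : (forall k, divides ('X_i ^+ k) p) -> p = 0.
Proof.
move=> dp; apply/eqP/negPn/negP => p0.
have [q pE] := dp (msize p).
have q0 : q != 0 by apply: contra p0; rewrite pE => /eqP ->; rewrite mulr0.
have := msizeM (expf_neq0 (msize p) (mpolyX_neq0 i)) q0.
rewrite -pE mpolyXn msizeX mdegMn mdeg1 mul1n.
have : (0 < msize q)%N by rewrite lt0n msize_poly_eq0.
case: (msize q) => // m _ /= sizeE.
by have := leqnn (msize p); rewrite {1}sizeE addnS /= -ltnS ltnNge leq_addr.
Qed.

End MpolyDerivative.

Section JacobianRow.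
Variables (K : fieldType) (n : nat) (F : 'I_n -> {mpoly K[n]}).
Variables (i : 'I_n) (c c' : K) (g : {mpoly K[n]}) (k : nat).
Hypothesis Fi : F i = c' *: 'X_i + 'X_i ^+ k.+2 * g + c%:MP.
Hypothesis Jsym : (jacobian F)^T = jacobian F.

Local Notation x := ('X_i : {mpoly K[n]}).
Local Notation J := (jacobian F).

Lemma jacobianE a b : J a b = (F a)^`M(b).
Proof. by rewrite mxE. Qed.

Lemma jacobian_sym a b : J a b = J b a.
Proof. by have := congr1 (fun M : 'M_n => M b a) Jsym; rewrite mxE. Qed.

Lemma jacobian_row_offdiag j : j != i -> J i j = x ^+ k.+2 * g^`M(j).
Proof.
move=> ji; rewrite jacobianE Fi !mderivD mderivZ mderivM mderivXn !mderiv_X.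
by rewrite mderivC eq_sym (negbTE ji) scaler0 mulr0 mul0r !add0r addr0.
Qed.

Lemma jacobian_diag :
  J i i = c'%:MP + x ^+ k.+1 * (k.+2%:R * g + x * g^`M(i)).
Proof.
rewrite jacobianE Fi !mderivD mderivZ mderivM mderivXn !mderiv_X mderivC.
by rewrite eqxx mulr1n alg_mpolyC addr0 !exprS; ring.
Qed.

(* For a, b <> i: d_i J_ab = d_b J_ai = d_b J_ia, and J_ia is a multiple of x_i^(k+2). *)
Lemma mderiv_jacobian_minor a b :
  a != i -> b != i -> (J a b)^`M(i) = x ^+ k.+2 * g^`M(a)^`M(b).
Proof.
move=> ai bi; rewrite jacobianE mderiv_comm -jacobianE jacobian_sym.
rewrite jacobian_row_offdiag // mderivM mderivXn mderiv_X.
by rewrite eq_sym (negbTE bi) mulr0 mul0r add0r.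
Qed.

Lemma divides_mderiv_cofactor : divides (x ^+ k.+2) (cofactor J i i)^`M(i).
Proof.
rewrite /cofactor -(rmorph_sign (@mpolyC n K)) mderiv_mulC; apply: dividesMl.
apply: divides_mderiv_det => a b; rewrite !mxE -jacobianE.
by rewrite mderiv_jacobian_minor ?(eq_sym _ i) ?neq_lift //; apply: divides_mulr.
Qed.

Lemma det_jacobian_expand :
  exists q, \det J = J i i * cofactor J i i + x ^+ k.+2 * q.
Proof.
exists (\sum_(j < n | j != i) g^`M(j) * cofactor J i j).
rewrite (expand_det_row _ i) (bigD1 i) //= big_distrr; congr (_ + _).
by apply: eq_bigr => j ji; rewrite jacobian_row_offdiag // -mulrA.
Qed.

Hypothesis char0 : [pchar K] =i pred0.
Variable d : K.
Hypothesis d_neq0 : d != 0.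
Hypothesis detJ : \det J = d%:MP.

(* Differentiating the constant det J in x_i kills everything but
   (k+1)(k+2) x_i^k g C modulo x_i^(k+1). *)
Lemma divides_X_mul_cofactor : divides x (g * cofactor J i i).
Proof.
have [q detE] := det_jacobian_expand; have [w dC] := divides_mderiv_cofactor.
move: (cofactor J i i) detE dC => C detE dC.
set s := k.+2%:R * g + x * g^`M(i).
set Y := k.+1%:R * g^`M(i) * C + s^`M(i) * C + (c'%:MP + x ^+ k.+1 * s) * x * w
   + k.+2%:R * q + x * q^`M(i).
have ddetE : x ^+ k * ((k.+1 * k.+2)%:R * g * C + x * Y) = 0.
  rewrite -(mderivC i d) -detJ detE jacobian_diag -/s mderivD.
  rewrite (mderivM _ (_ + _)) (mderivM _ (_ ^+ _)) dC mderivD mderivC.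
  rewrite (mderivM _ (_ ^+ _)) !mderivXn mderiv_X eqxx mulr1n.
  by rewrite /Y /s natrM !exprS; ring.
have natK_neq0 : ((k.+1 * k.+2)%:R : K) != 0.
  by rewrite natrM mulf_neq0 // ((pcharf0P K).1 char0).
have gCE : (k.+1 * k.+2)%:R * g * C = x * - Y.
  apply/eqP; rewrite mulrN -addr_eq0; move/eqP: ddetE.
  by rewrite mulf_eq0 expf_eq0 (negbTE (mpolyX_neq0 K i)) andbF.
exists ((((k.+1 * k.+2)%:R : K)^-1)%:MP * - Y).
rewrite mulrCA -gCE -mpolyC_nat !mulrA -mpolyCM mulVf //.
by rewrite mpolyC1 mul1r.
Qed.

Lemma divides_X_of_jacobian_row : divides x g.
Proof.
have [q detE] := det_jacobian_expand; have [r gC] := divides_X_mul_cofactor.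
set C := cofactor J i i in detE gC *; set s := k.+2%:R * g + x * g^`M(i).
set T := x ^+ k * s * C + x ^+ k.+1 * q.
have dE : d%:MP = c'%:MP * C + x * T.
  by rewrite -detJ detE jacobian_diag -/C -/s /T !exprS; ring.
have dgE : d%:MP * g = x * (c'%:MP * r + g * T).
  by rewrite dE mulrDl -mulrA (mulrC C) gC; ring.
exists (d^-1%:MP * (c'%:MP * r + g * T)).
by rewrite mulrCA -dgE mulrA -mpolyCM mulVf // mpolyC1 mul1r.
Qed.

End JacobianRow.

Theorem lemma7p1 (K : fieldType) (n : nat) (F : 'I_n -> {mpoly K[n]}) :
  [pchar K] =i pred0 ->
  keller F ->
  (jacobian F)^T = jacobian F ->
  forall (i : 'I_n) (c c' : K) (h : {mpoly K[n]}),
    F i = c' *: 'X_i + 'X_i ^+ 2 * h + c%:MP ->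
    h = 0.
Proof.
move=> char0 [d [d_neq0 detJ]] Jsym i c c' h Fi.
apply: (dividesXn_eq0 (i := i)); elim=> [|k [g hE]].
  by exists h; rewrite expr0 mul1r.
have [r gE] : divides 'X_i g.
  apply: (divides_X_of_jacobian_row (k := k) _ Jsym char0 d_neq0 detJ).
  by rewrite Fi hE mulrA -exprD.
by exists r; rewrite hE gE exprSr mulrA.
Qed.
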